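(* Let $n,m\ge 1$, let $\boldsymbol{W}\in\mathbb{R}^{n\times n}$ be symmetric with non-negative entries, $\boldsymbol{S}=(s_{kr})\in[0,1]^{m\times m}$ symmetric with $s_{kk}=0$, $\boldsymbol{\gamma}\in\mathbb{R}^m$, $\boldsymbol{\rho}\in[\frac{\pi}{4},\frac{\pi}{2})^m$, $\alpha\in\mathbb{R}$, and $S_k=\sum_{r}s_{kr}$. Let the neuron set $V=\{1,\dots,n\}$ be bipartitioned as $V=U\cup L$ with $U=\{1,\dots,h\}$, $L=\{h+1,\dots,n\}$. The state space $\mathcal{X}$ consists of matrices $\boldsymbol{X}=(x_{ik})_{i\in V,1\le k\le m}$ with $x_{ik}\in\{\sin\rho_k,-\cos\rho_k\}$, written $\boldsymbol{X}=(\boldsymbol{L},\boldsymbol{U})$ with $\boldsymbol{L}$ the rows indexed by $L$ and $\boldsymbol{U}$ the rows indexed by $U$. Define the energy of the multitask Hopfield network $\mathcal{H}=\langle\boldsymbol{W},\boldsymbol{\gamma},\boldsymbol{\rho},\boldsymbol{S}\rangle$ as $$E_{\mathcal{H}}(\boldsymbol{X})=\sum_{k=1}^m\Big(-\tfrac12 {\boldsymbol{x}^{(k)}}^T\boldsymbol{W}\boldsymbol{x}^{(k)}+\gamma_k\sum_{i=1}^n x_{ik}+\tfrac{\alpha}{2}\Big(S_k\sum_{i=1}^n x_{ik}^2-\sum_{r\ne k}s_{kr}\sum_{i=1}^n x_{ik}x_{ir}\Big)\Big),$$ and, for a fixed $\boldsymbol{L}=(\boldsymbol{l}^{(1)},\dots,\boldsymbol{l}^{(m)})$,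 the energy of the subnetwork $\mathcal{H}_U=\langle\boldsymbol{W}_{UU},\boldsymbol{\gamma},\boldsymbol{\rho},\boldsymbol{S}\rangle$ restricted to $U$ (with labeled neurons clamped to $\boldsymbol{L}$) as $$E_{\mathcal{H}_U}(\boldsymbol{U})=\sum_{k=1}^m\Big(-\tfrac12 {\boldsymbol{u}^{(k)}}^T\boldsymbol{W}_{UU}\boldsymbol{u}^{(k)}+{\boldsymbol{u}^{(k)}}^T\big(\gamma_k\boldsymbol{e}_h-\boldsymbol{W}_{UL}\boldsymbol{l}^{(k)}\big)+\tfrac{\alpha}{2}\Big(S_k\sum_{i=1}^h u_{ik}^2-\sum_{r\ne k}s_{kr}\sum_{i=1}^h u_{ik}u_{ir}\Big)\Big),$$ where $\boldsymbol{u}^{(k)}$ is the $k$-th column of $\boldsymbol{U}$, $\boldsymbol{e}_h$ the all-ones vector of length $h$, and $\boldsymbol{W}_{UU},\boldsymbol{W}_{UL}$ the submatrices of $\boldsymbol{W}$ with rows in $U$ and columns in $U$, resp. $L$. If $\boldsymbol{L}$ is part of a global minimum of $E_{\mathcal{H}}$ (i.e. there exists $\boldsymbol{U}^*$ such that $(\boldsymbol{L},\boldsymbol{U}^* )$ minimizes $E_{\mathcal{H}}$ over $\mathcal{X}$) and $\boldsymbol{U}$ is a global minimum of $E_{\mathcal{H}_U}$, then $(\boldsymbol{L},\boldsymbol{U})$ is a global minimum of $E_{\mathcal{H}}$.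
   Context: $\boldsymbol{x}^{(k)}$ denotes the $k$-th column of $\boldsymbol{X}$ (the state vector for task $k$). In $\mathcal{H}_U$ the contribution of the labeled neurons, whose states are fixed to $\boldsymbol{L}$, is absorbed into the activation thresholds $\gamma_k\boldsymbol{e}_h-\boldsymbol{W}_{UL}\boldsymbol{l}^{(k)}$. *)

From HB Require Import structures.
From mathcomp Require Import all_boot all_order all_algebra.
From mathcomp Require Import reals trigo.
Set Implicit Arguments. Unset Strict Implicit. Unset Printing Implicit Defensive.
Import Order.TTheory GRing.Theory Num.Theory.
Local Open Scope ring_scope.

Section Hopfield.
Variable R : realType.

Definition is_state (p m : nat) (rho : 'I_m -> R) (X : 'M[R]_(p, m)) : Prop :=
  forall i k, X i k = sin (rho k) \/ X i k = - cos (rho k).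

Definition Ssum (m : nat) (S : 'M[R]_m) (k : 'I_m) : R := \sum_(r < m) S k r.

Definition energy (p m : nat) (W : 'M[R]_p) (gamma : 'I_m -> R) (S : 'M[R]_m)
    (alpha : R) (X : 'M[R]_(p, m)) : R :=
  \sum_(k < m)
    ( - 2^-1 * (\sum_(i < p) \sum_(j < p) X i k * W i j * X j k)
      + gamma k * (\sum_(i < p) X i k)
      + alpha / 2 * (Ssum S k * (\sum_(i < p) X i k ^+ 2)
                     - \sum_(r < m | r != k) S k r * (\sum_(i < p) X i k * X i r))).

(* energy of the subnetwork H_U on U = first h neurons, labeled neurons
   L = last l neurons clamped to Lm; W is indexed by 'I_(h + l) *)
Definition energy_sub (h l m : nat) (W : 'M[R]_(h + l)) (gamma : 'I_m -> R)
    (S : 'M[R]_m) (alpha : R) (Lm : 'M[R]_(l, m)) (U : 'M[R]_(h, m)) : R :=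
  \sum_(k < m)
    ( - 2^-1 * (\sum_(i < h) \sum_(j < h) U i k * W (lshift l i) (lshift l j) * U j k)
      + \sum_(i < h) U i k * (gamma k - \sum_(j < l) W (lshift l i) (rshift h j) * Lm j k)
      + alpha / 2 * (Ssum S k * (\sum_(i < h) U i k ^+ 2)
                     - \sum_(r < m | r != k) S k r * (\sum_(i < h) U i k * U i r))).

End Hopfield.

From HB Require Import structures.
From mathcomp Require Import all_boot all_order all_algebra.
From mathcomp Require Import reals trigo.
From mathcomp Require Import ring.
Import Order.TTheory GRing.Theory Num.Theory.
Local Open Scope ring_scope.

(* For a symmetric W the global energy of (L, U) splits as the energy of the
   subnetwork H_U at U plus a term depending on L alone: the cross terms
   u^T W_UL l are exactly what H_U absorbs into its thresholds.  Among states
   with the labelled block fixed to L, minimising E_H is thus the same as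
   minimising E_{H_U}, and since some (L, U') is a global minimum, so is any
   (L, U) with U minimising E_{H_U}. *)

Section BlockDecomposition.
Variables (R : realType) (h l m : nat).

Lemma is_state_col_mx (rho : 'I_m -> R) (A : 'M[R]_(h, m)) (B : 'M[R]_(l, m)) :
  is_state rho (col_mx A B) <-> is_state rho A /\ is_state rho B.
Proof.
split=> [sAB | [sA sB] i k].
  split=> i k; [have := sAB (lshift l i) k | have := sAB (rshift h i) k].
    by rewrite col_mxEu.
  by rewrite col_mxEd.
rewrite -[i](splitK i); case: (split i) => j /=.
  by rewrite col_mxEu; apply: sA.
by rewrite col_mxEd; apply: sB.
Qed.

Lemma sum_col_mx (f : R -> R -> R) (A : 'M[R]_(h, m)) (B : 'M[R]_(l, m)) k r :
  \sum_(i < h + l) f (col_mx A B i k) (col_mx A B i r) =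
  \sum_(i < h) f (A i k) (A i r) + \sum_(i < l) f (B i k) (B i r).
Proof.
rewrite big_split_ord /=.
by congr (_ + _); apply: eq_bigr => i _; rewrite ?col_mxEu ?col_mxEd.
Qed.

Lemma qform_col_mx (W : 'M[R]_(h + l)) (A : 'M[R]_(h, m)) (B : 'M[R]_(l, m)) k :
  W^T = W ->
  \sum_(i < h + l) \sum_(j < h + l) col_mx A B i k * W i j * col_mx A B j k =
    \sum_(i < h) \sum_(j < h) A i k * ulsubmx W i j * A j k
  + 2 * (\sum_(i < h) \sum_(j < l) A i k * ursubmx W i j * B j k)
  + \sum_(i < l) \sum_(j < l) B i k * drsubmx W i j * B j k.
Proof.
move=> WT; have Wsym i j : W j i = W i j by rewrite -{1}WT mxE.
set C := \sum_(i < h) \sum_(j < l) _.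
have rows_split i : \sum_(j < h + l) col_mx A B i k * W i j * col_mx A B j k =
    \sum_(j < h) col_mx A B i k * W i (lshift l j) * A j k
  + \sum_(j < l) col_mx A B i k * W i (rshift h j) * B j k.
  by rewrite big_split_ord /=; congr (_ + _); apply: eq_bigr => j _;
     rewrite ?col_mxEu ?col_mxEd.
rewrite big_split_ord /=; under eq_bigr do rewrite rows_split col_mxEu.
under [X in _ + X]eq_bigr do rewrite rows_split col_mxEd.
rewrite !big_split /=.
have -> : \sum_(i < l) \sum_(j < h) B i k * W (rshift h i) (lshift l j) * A j k = C.
  rewrite /C exchange_big; apply: eq_bigr => i _; apply: eq_bigr => j _.
  by rewrite Wsym !mxE; ring.
have -> : \sum_(i < h) \sum_(j < l) A i k * W (lshift l i) (rshift h j) * B j k = C.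
  by rewrite /C; apply: eq_bigr => i _; apply: eq_bigr => j _; rewrite !mxE.
have -> : \sum_(i < h) \sum_(j < h) A i k * W (lshift l i) (lshift l j) * A j k =
          \sum_(i < h) \sum_(j < h) A i k * ulsubmx W i j * A j k.
  by apply: eq_bigr => i _; apply: eq_bigr => j _; rewrite !mxE.
have -> : \sum_(i < l) \sum_(j < l) B i k * W (rshift h i) (rshift h j) * B j k =
          \sum_(i < l) \sum_(j < l) B i k * drsubmx W i j * B j k.
  by apply: eq_bigr => i _; apply: eq_bigr => j _; rewrite !mxE.
ring.
Qed.

Lemma energy_col_mx (W : 'M[R]_(h + l)) (gamma : 'I_m -> R) (S : 'M[R]_m)
    (alpha : R) (Lm : 'M[R]_(l, m)) (U : 'M[R]_(h, m)) :
  W^T = W ->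
  energy W gamma S alpha (col_mx U Lm) =
  energy_sub W gamma S alpha Lm U + energy (drsubmx W) gamma S alpha Lm.
Proof.
move=> WT; rewrite /energy /energy_sub -big_split /=; apply: eq_bigr => k _.
rewrite qform_col_mx // (sum_col_mx (fun x _ => x) U Lm k k).
rewrite (sum_col_mx (fun x _ => x ^+ 2) U Lm k k).
under eq_bigr => r _ do rewrite (sum_col_mx *%R U Lm k r) mulrDr.
rewrite big_split /=.
have -> : \sum_(i < h) U i k * (gamma k - \sum_(j < l) W (lshift l i) (rshift h j) * Lm j k)
    = gamma k * \sum_(i < h) U i k
      - \sum_(i < h) \sum_(j < l) U i k * ursubmx W i j * Lm j k.
  rewrite big_distrr -sumrB; apply: eq_bigr => i _.
  rewrite mulrBr big_distrr /= mulrC; congr (_ - _).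
  by apply: eq_bigr => j _; rewrite !mxE mulrA.
have -> : \sum_(i < h) \sum_(j < h) U i k * W (lshift l i) (lshift l j) * U j k =
          \sum_(i < h) \sum_(j < h) U i k * ulsubmx W i j * U j k.
  by apply: eq_bigr => i _; apply: eq_bigr => j _; rewrite !mxE.
by field.
Qed.

End BlockDecomposition.

Theorem theorem3 (R : realType) (h l m : nat)
  (W : 'M[R]_(h + l)) (S : 'M[R]_m) (gamma rho : 'I_m -> R) (alpha : R)
  (Lm : 'M[R]_(l, m)) (U : 'M[R]_(h, m)) :
  (0 < h + l)%N -> (0 < m)%N ->
  W^T = W -> (forall i j, 0 <= W i j) ->
  S^T = S -> (forall k r, 0 <= S k r <= 1) -> (forall k, S k k = 0) ->
  (forall k, pi / 4 <= rho k < pi / 2) ->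
  (exists Ustar : 'M[R]_(h, m),
      is_state rho (col_mx Ustar Lm) /\
      forall Y : 'M[R]_(h + l, m), is_state rho Y ->
        energy W gamma S alpha (col_mx Ustar Lm) <= energy W gamma S alpha Y) ->
  is_state rho U ->
  (forall U' : 'M[R]_(h, m), is_state rho U' ->
     energy_sub W gamma S alpha Lm U <= energy_sub W gamma S alpha Lm U') ->
  is_state rho (col_mx U Lm) /\
  forall Y : 'M[R]_(h + l, m), is_state rho Y ->
    energy W gamma S alpha (col_mx U Lm) <= energy W gamma S alpha Y.
Proof.
move=> _ _ WT _ _ _ _ _ [Us [/is_state_col_mx[sUs sL] minUs]] sU minU.
split; first exact/is_state_col_mx.
move=> Y sY; apply: le_trans (minUs Y sY).
by rewrite !energy_col_mx // lerD2r; apply: minU.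
Qed.
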